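(* The semigroup $S=sgp^+\langle a,b\mid aba=ba\rangle$ is not automatic.
   Context: $sgp^+\langle A\mid R\rangle$ is the free semigroup $A^+$ of nonempty words modulo the congruence generated by $R$. Automaticity: regular = accepted by a finite automaton. With $\$\notin A$, $A(2,\$)=(A\cup\{\$\})^2\setminus\{(\$,\$)\}$; $(\alpha,\beta)\delta_A^R$ is the word over $A(2,\$)$ obtained by padding the shorter word on the right with $\$$'s and reading letter pairs. A semigroup $S$ is automatic if there are a finite generating set $A$ (with canonical epimorphism $\phi:A^+\to S$) and a regular $L\subseteq A^+$ with $\phi(L)=S$ such that for every $a\in A\cup\{\varepsilon\}$ the language $\{(\alpha,\beta)\delta^R_A:\alpha,\beta\in L,\ \phi(\alpha a)=\phi(\beta)\}$ is regular. *)

From Stdlib Require Import Relation_Operators.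
From mathcomp Require Import all_boot.
Set Implicit Arguments. Unset Strict Implicit. Unset Printing Implicit Defensive.

(* Words are seq X; the semigroup consists of nonempty words modulo the
   congruence generated by the relation R (a Prop-valued set of pairs). *)
Inductive pres_step (X : Type) (R : seq X -> seq X -> Prop) : seq X -> seq X -> Prop :=
| pres_step_intro u v l r : R l r -> pres_step R (u ++ l ++ v) (u ++ r ++ v).

Definition pres_cong (X : Type) (R : seq X -> seq X -> Prop) : seq X -> seq X -> Prop :=
  clos_refl_sym_trans (seq X) (pres_step R).

Definition regular (S : finType) (K : seq S -> Prop) : Prop :=
  exists (Q : finType) (q0 : Q) (delta : Q -> S -> Q) (F : pred Q),
    forall w, K w <-> F (foldl delta q0 w).

(* A(2,$) = (A u {$})^2 \ {($,$)}, with $ represented by None. *)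
Definition A2 (A : finType) := {p : option A * option A | p != (None, None)}.

Definition conv_raw (A : finType) (al be : seq A) : seq (option A * option A) :=
  mkseq (fun i => (nth None (map Some al) i, nth None (map Some be) i))
        (maxn (size al) (size be)).

(* (al,be)delta_A^R: no letter of conv_raw is ($,$), so pmap insub keeps all. *)
Definition conv (A : finType) (al be : seq A) : seq (A2 A) :=
  pmap insub (conv_raw al be).

(* S = sgp^+<X | R> is automatic: there are a finite generating set A, i.e. a
   finite type A with a map gen : A -> S (letters sent to nonempty words over
   X, representing elements of S), and a regular L subset A^+ with phi(L) = S
   such that for each a in A u {eps} (option A, None = eps) the language
   {(al,be)delta : al, be in L, phi(al a) = phi(be)} is regular. *)
Definition automatic_pres (X : Type) (R : seq X -> seq X -> Prop) : Prop :=
  exists (A : finType) (gen : A -> seq X),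
    (forall x, gen x <> [::]) /\
    let phi := fun al : seq A => flatten (map gen al) in
    exists L : seq A -> Prop,
      regular L /\
      (forall al, L al -> al <> [::]) /\
      (forall w : seq X, w <> [::] -> exists al, L al /\ pres_cong R (phi al) w) /\
      (forall a : option A,
         regular (fun g : seq (A2 A) =>
           exists al be, L al /\ L be /\ g = conv al be /\
                         pres_cong R (phi (al ++ (if a is Some x then [:: x] else [::]))) (phi be))).

Definition ga : bool := true.
Definition gb : bool := false.
Definition rel_aba_ba (l r : seq bool) : Prop :=
  l = [:: ga; gb; ga] /\ r = [:: gb; ga].

(* In S, the word a^i b^n (n > 0) is alone in its class, since both sides of
   aba = ba contain the factor ba; yet a^i b^n w = b^n w whenever w contains a.
   Fix a generator g whose value contains a. A representative al of a^i b^n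
   then satisfies al g = be for a representative be of b^n g, and for i large
   al is much longer than be. Pumping the padded tail of (al, be) in the
   automaton recognising the equality language of g deletes a nonempty factor
   of al whose value lies in the block b^n; this changes the number of b's,
   which the relation preserves. *)
From Stdlib Require Import Relation_Operators.
From mathcomp Require Import all_boot zify.
Set Implicit Arguments. Unset Strict Implicit. Unset Printing Implicit Defensive.

Section Convolution.
Variable A : finType.
Implicit Types al be u s : seq A.

Lemma conv_raw_cons al be : conv_raw al be =
  if (al, be) is ([::], [::]) then [::]
  else (ohead al, ohead be) :: conv_raw (behead al) (behead be).
Proof.
have mkseqSl n (f : nat -> option A * option A) :
    mkseq f n.+1 = f 0 :: mkseq (f \o succn) n.
  by rewrite /mkseq /= -add1n iotaDl -map_comp.
case: al be => [|x al] [|y be] //; rewrite /conv_raw /= ?max0n ?maxn0 ?maxnSS mkseqSl;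
  by congr (_ :: _); apply: eq_mkseq => j /=; rewrite ?nth_nil.
Qed.

Lemma conv_raw_consl x al be :
  conv_raw (x :: al) be = (Some x, ohead be) :: conv_raw al (behead be).
Proof. exact: conv_raw_cons. Qed.

Lemma conv_raw_cat u s be : size be <= size u ->
  conv_raw (u ++ s) be = conv_raw u be ++ conv_raw s [::].
Proof.
elim: u be => [|x u IH] be; first by case: be.
by move=> le_be_u; rewrite !conv_raw_consl IH //; case: be le_be_u.
Qed.

Lemma conv_raw_nilr s : conv_raw s [::] = map (fun x => (Some x, None)) s.
Proof. by elim: s => //= x s IH; rewrite conv_raw_cons /= IH. Qed.

Lemma conv_raw_neq_none al be : all (fun p => p != (None, None)) (conv_raw al be).
Proof.
elim: al be => [|x al IH] be; last by rewrite conv_raw_cons /= IH.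
by elim: be => [|y be IHbe]; rewrite conv_raw_cons.
Qed.

Lemma pmap_fst_conv_raw al be : pmap fst (conv_raw al be) = al.
Proof.
elim: al be => [|x al IH] be; last by rewrite conv_raw_cons /= IH.
by elim: be => [|y be IHbe]; rewrite conv_raw_cons.
Qed.

Lemma pmap_snd_conv_raw al be : pmap snd (conv_raw al be) = be.
Proof.
elim: be al => [|y be IH] al; last by case: al => [|x al]; rewrite conv_raw_cons /= IH.
by elim: al => [|x al IHal]; rewrite conv_raw_cons.
Qed.

Lemma val_conv al be : map val (conv al be) = conv_raw al be.
Proof.
rewrite /conv (pmap_filter (@insubK _ _ _)) (eq_filter (isSome_insub _)).
exact/all_filterP/conv_raw_neq_none.
Qed.

Lemma conv_inj al be al' be' : conv al be = conv al' be' -> al = al' /\ be = be'.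
Proof.
move=> /(congr1 (map val)); rewrite !val_conv => E.
split; first by rewrite -[al](pmap_fst_conv_raw _ be) E pmap_fst_conv_raw.
by rewrite -[be](pmap_snd_conv_raw al) E pmap_snd_conv_raw.
Qed.

Lemma conv_cat u s be : size be <= size u ->
  conv (u ++ s) be = conv u be ++ conv s [::].
Proof. by move=> le_be_u; rewrite /conv conv_raw_cat // pmap_cat. Qed.

Definition padded_letter (x : A) : A2 A := exist _ (Some x, None) isT.

Lemma conv_nilr s : conv s [::] = map padded_letter s.
Proof. by apply: (inj_map val_inj); rewrite val_conv conv_raw_nilr -map_comp. Qed.

End Convolution.

Lemma foldl_pump (T : Type) (Q : finType) (delta : Q -> T -> Q) (q : Q) (s : seq T) :
  #|Q| <= size s -> exists s1 y s2,
    [/\ s = s1 ++ y ++ s2, 0 < size y & foldl delta q (s1 ++ s2) = foldl delta q s].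
Proof.
move=> le_Q_s; pose run (j : 'I_(size s).+1) := foldl delta q (take j s).
have /injectivePn [j1 [j2 neq_j12 run_j12]] : ~~ injectiveb run.
  by apply/injectiveP => /leq_card; rewrite card_ord; lia.
wlog lt_j12 : j1 j2 neq_j12 run_j12 / j1 < j2.
  move=> wlog_lt; case: (ltngtP j1 j2) => [|lt_j21|/val_inj eq_j12]; first exact: wlog_lt.
    by apply: (wlog_lt j2 j1); rewrite 1?eq_sym.
  by rewrite eq_j12 eqxx in neq_j12.
exists (take j1 s), (drop j1 (take j2 s)), (drop j2 s); split.
- by rewrite catA -{1}(take_takel s (ltnW lt_j12)) !cat_take_drop.
- by rewrite size_drop size_take; have := ltn_ord j2; case: ifP; lia.
- by rewrite foldl_cat -/(run j1) run_j12 -foldl_cat cat_take_drop.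
Qed.

Definition conv_lang (A : finType) (L : seq A -> Prop) (P : seq A -> seq A -> Prop)
  (g : seq (A2 A)) : Prop :=
  exists al be, L al /\ L be /\ g = conv al be /\ P al be.

Lemma regular_conv_lang_pump (A : finType) (L : seq A -> Prop) (P : seq A -> seq A -> Prop) :
  regular (conv_lang L P) ->
  exists N, forall al be, L al -> L be -> P al be -> size be + N <= size al ->
    exists u y v, [/\ al = u ++ y ++ v, 0 < size y, size (y ++ v) <= N,
                      L (u ++ v) & P (u ++ v) be].
Proof.
case=> Q [q0 [delta [F accept]]]; exists #|Q| => al be Lal Lbe Palbe long_al.
pose u := take (size al - #|Q|) al; pose s := drop (size al - #|Q|) al.
have size_s : size s = #|Q| by rewrite size_drop; lia.
have le_be_u : size be <= size u by rewrite size_take; case: ltnP; lia.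
have foldl_pad q t :
    foldl delta q (map (@padded_letter A) t) = foldl (fun q x => delta q (padded_letter x)) q t.
  by elim: t q => //= x t IH q; rewrite IH.
have [s1 [y [s2 [def_s y_gt0 pump]]]] := foldl_pump
  (fun q x => delta q (padded_letter x)) (foldl delta q0 (conv u be)) (eq_leq (esym size_s)).
have al_def : al = u ++ s1 ++ y ++ s2 by rewrite -def_s cat_take_drop.
have /accept [al' [be' [Lal' [_ [conv_eq Pal'be']]]]] :
    F (foldl delta q0 (conv (u ++ s1 ++ s2) be)).
  rewrite conv_cat // conv_nilr foldl_cat foldl_pad pump -foldl_pad -conv_nilr -foldl_cat.
  by rewrite -conv_cat // cat_take_drop; apply/accept; exists al, be.
case: (conv_inj conv_eq) Lal' Pal'be' => <- <- Lal' Pal'be'.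
exists (u ++ s1), y, s2; rewrite -!catA; split => //.
by move: size_s; rewrite def_s !size_cat; lia.
Qed.

Section PresentationCongruence.
Variables (X : Type) (R : seq X -> seq X -> Prop).
Local Notation cong := (pres_cong R).

Lemma pres_cong_sym x y : cong x y -> cong y x.
Proof. exact: rst_sym. Qed.

Lemma pres_cong_trans y x z : cong x y -> cong y z -> cong x z.
Proof. exact: rst_trans. Qed.

Lemma pres_cong_rel l r : R l r -> cong l r.
Proof. by move=> Rlr; apply: rst_step; have := pres_step_intro [::] [::] Rlr; rewrite !cats0. Qed.

Lemma pres_cong_cat u v x y : cong x y -> cong (u ++ x ++ v) (u ++ y ++ v).
Proof.
elim=> {x y} [x y [u' v' l r Rlr] | x | x y _ IH | x y z _ IHxy _ IHyz].
- by apply: rst_step; move: (pres_step_intro (u ++ u') (v' ++ v) Rlr); rewrite -!catA.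
- exact: rst_refl.
- exact: pres_cong_sym.
- exact: pres_cong_trans IHxy IHyz.
Qed.

Lemma pres_cong_catl u x y : cong x y -> cong (u ++ x) (u ++ y).
Proof. by move/(pres_cong_cat u [::]); rewrite !cats0. Qed.

Lemma pres_cong_catr v x y : cong x y -> cong (x ++ v) (y ++ v).
Proof. exact: pres_cong_cat [::] v x y. Qed.

Lemma pres_cong_inv (T : Type) (f : seq X -> T) :
  (forall u v l r, R l r -> f (u ++ l ++ v) = f (u ++ r ++ v)) ->
  forall x y, cong x y -> f x = f y.
Proof. by move=> f_inv x y; elim=> {x y} [x y [] | | x y _ -> | x y z _ -> _ ->] //. Qed.

End PresentationCongruence.

Lemma pres_cong_irreducible (X : eqType) (R : seq X -> seq X -> Prop) (w w' : seq X) :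
  (forall u v l r, R l r -> u ++ l ++ v <> w /\ u ++ r ++ v <> w) ->
  pres_cong R w w' -> w' = w.
Proof.
move=> irr ww'; apply/eqP; rewrite -(pres_cong_inv (f := fun x => x == w) _ ww') ?eqxx //.
by move=> u v l r /(irr u v) [/eqP/negbTE -> /eqP/negbTE ->].
Qed.

Section FlattenMap.
Variables (A X : Type) (gen : A -> seq X).

Lemma size_flatten_map_le M s :
  (forall x, size (gen x) <= M) -> size (flatten (map gen s)) <= M * size s.
Proof. by move=> gen_le; elim: s => //= x s IH; rewrite size_cat mulnS leq_add. Qed.

Lemma size_flatten_map_ge s :
  (forall x, gen x <> [::]) -> size s <= size (flatten (map gen s)).
Proof.
move=> gen_ne; elim: s => //= x s IH; rewrite size_cat -add1n leq_add //.
by case: (gen x) (gen_ne x).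
Qed.

End FlattenMap.

Lemma suffix_nseq_cat (T : Type) (a b : T) i n (x y : seq T) :
  x ++ y = nseq i a ++ nseq n b -> size y <= n -> y = nseq (size y) b.
Proof.
move=> xy le_y_n; have := congr1 size xy; rewrite !size_cat !size_nseq => size_xy.
suff <- : drop (size x) (nseq i a ++ nseq n b) = nseq (size y) b by rewrite -xy drop_size_cat.
by rewrite drop_cat size_nseq ifN ?drop_nseq; [congr nseq|]; lia.
Qed.

Local Notation cong := (pres_cong rel_aba_ba).

Lemma cong_count_b x y : cong x y -> count_mem gb x = count_mem gb y.
Proof. by apply: pres_cong_inv => u v l r [-> ->]; rewrite !count_cat. Qed.

Lemma cong_mem_a x y : cong x y -> (ga \in x) = (ga \in y).
Proof.
by apply: (pres_cong_inv (f := fun w => ga \in w)) => u v l r [-> ->]; rewrite !mem_cat.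
Qed.

Lemma cong_nseq_ab_eq i n w : cong (nseq i ga ++ nseq n gb) w -> w = nseq i ga ++ nseq n gb.
Proof.
apply: pres_cong_irreducible => u v l r [-> ->].
pose no_ba := sorted [rel x y | (x, y) != (gb, ga)].
have no_ba_nf : no_ba (nseq i ga ++ nseq n gb).
  elim: i => [|i IH] /=; last by rewrite path_min_sorted //; apply/allP.
  by elim: n => //= n IH; rewrite path_min_sorted // all_nseq orbT.
have ba_not_sorted t t' : ~ no_ba (t ++ [:: gb; ga] ++ t').
  by move/(infix_sorted (infix_infix t [:: gb; ga] t')).
split=> nf_eq; move: no_ba_nf; rewrite -nf_eq; last exact: ba_not_sorted.
by have := ba_not_sorted (u ++ [:: ga]) v; rewrite -catA.
Qed.

Lemma cong_bn_a n w : 0 < n -> cong (nseq n gb ++ ga :: w) (ga :: nseq n gb ++ ga :: w).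
Proof.
have ba_aba v : cong ([:: gb; ga] ++ v) ([:: ga; gb; ga] ++ v).
  exact/pres_cong_catr/pres_cong_sym/pres_cong_rel.
case: n => // n _; elim: n => [|n IH]; first exact: ba_aba.
(* b^(n+2) a = b (b^(n+1) a) ~ b (a b^(n+1) a) = (ba) b^(n+1) a ~ (aba) b^(n+1) a
   = ab (a b^(n+1) a) ~ ab (b^(n+1) a) *)
apply: pres_cong_trans (pres_cong_catl [:: gb] IH) _.
apply: pres_cong_trans (ba_aba (nseq n.+1 gb ++ ga :: w)) _.
exact (pres_cong_catl [:: ga; gb] (pres_cong_sym IH)).
Qed.

Lemma cong_drop_a_prefix i n w : 0 < n -> ga \in w ->
  cong (nseq i ga ++ nseq n gb ++ w) (nseq n gb ++ w).
Proof.
elim: w n => // x w IHw n n_gt0; case: x => [_ {IHw} | /IHw IH].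
  elim: i => [|i IH]; first exact: rst_refl.
  exact: pres_cong_trans (pres_cong_catl [:: ga] IH) (pres_cong_sym (cong_bn_a w n_gt0)).
by have := IH n.+1 isT; rewrite -addn1 nseqD -catA.
Qed.

Lemma cong_cut_b_factor p q r s i n :
  p ++ q ++ r = nseq i ga ++ nseq n gb -> size (q ++ r) <= n ->
  cong (p ++ r ++ s) (p ++ q ++ r ++ s) -> q = [::].
Proof.
move=> pqr_eq le_qr_n /cong_count_b; rewrite !count_cat => count_eq.
have := congr1 (count_mem gb) (suffix_nseq_cat pqr_eq le_qr_n).
rewrite count_nseq mul1n count_cat size_cat.
have : count_mem gb r <= size r := count_size _ _.
by move=> ? ?; apply: size0nil; lia.
Qed.

Lemma flatten_map_mem_a (A : Type) (gen : A -> seq bool) (L : seq A -> Prop) :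
  (forall w, w <> [::] -> exists al, L al /\ cong (flatten (map gen al)) w) ->
  exists x, ga \in gen x.
Proof.
move=> onto.
have [al [_ /cong_mem_a]] : exists al, L al /\ cong (flatten (map gen al)) [:: ga] by apply: onto.
rewrite mem_seq1 eqxx; elim: al => //= x al IH.
by rewrite mem_cat => /orP [a_in_x | /IH //]; exists x.
Qed.

Theorem lemma3p2p4 : ~ automatic_pres rel_aba_ba.
Proof.
case=> A [gen [gen_ne /= [L [_ [_ [L_onto L_eq_reg]]]]]].
pose phi al := flatten (map gen al).
have phi_cat al be : phi (al ++ be) = phi al ++ phi be by rewrite /phi map_cat flatten_cat.
have [x0 a_in_x0] := flatten_map_mem_a L_onto.
have [N pump] := regular_conv_lang_pump
  (P := fun al be => cong (phi (al ++ [:: x0])) (phi be)) (L_eq_reg (Some x0)).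
pose M := \max_(x : A) size (gen x).
have gen_le_M x : size (gen x) <= M by exact: leq_bigmax.
have [be [Lbe be_eq]] : exists be, L be /\ cong (phi be) (nseq (M * N).+1 gb ++ gen x0).
  by apply: L_onto.
pose i := M * (size be + N).
have [al [Lal /pres_cong_sym/cong_nseq_ab_eq phi_al]] :
    exists al, L al /\ cong (phi al) (nseq i ga ++ nseq (M * N).+1 gb).
  by apply: L_onto; case: i.
have al_be : cong (phi (al ++ [:: x0])) (phi be).
  rewrite phi_cat phi_al /phi /= cats0 -catA.
  exact: pres_cong_trans (cong_drop_a_prefix _ _ a_in_x0) (pres_cong_sym be_eq).
have long_al : size be + N <= size al.
  have := size_flatten_map_le al gen_le_M; rewrite -/(phi al) phi_al size_cat !size_nseq.
  move=> le_al; have : M * (size be + N) < M * size al by rewrite /i in le_al; lia.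
  by rewrite ltn_mul2l => /andP [_ /ltnW].
have [u [y [v [al_uyv y_gt0 yv_le_N _ uv_be]]]] := pump al be Lal Lbe al_be long_al.
have phi_y : phi y = [::].
  apply: (@cong_cut_b_factor (phi u) _ (phi v) (gen x0) i (M * N).+1).
  - by rewrite -!phi_cat -al_uyv.
  - by rewrite -phi_cat; apply/leqW/(leq_trans (size_flatten_map_le _ gen_le_M))/leq_mul.
  - have := pres_cong_trans uv_be (pres_cong_sym al_be).
    by rewrite al_uyv !phi_cat /phi /= cats0 -!catA.
by have := size_flatten_map_ge y gen_ne; rewrite -/(phi y) phi_y /=; lia.
Qed.
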